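(* Let $\mathbb{H}$ be a reproducing kernel Hilbert space with inner product $\langle\cdot,\cdot\rangle$ and feature map $\phi$, and let $(X,A,Y)$ be jointly distributed with $Y=\langle\phi(X),y\rangle$ and $A=\langle\phi(X),a\rangle$ for some nonzero $y,a\in\mathbb{H}$, with $\operatorname{Var}(Y),\operatorname{Var}(A)>0$; let $\rho_{YA}$ be the correlation coefficient of $Y$ and $A$ and $\ell(u,v)=(u-v)^2$. Let $Z=g(X)$ be any (possibly randomized) representation. If $\operatorname{Var}\mathbb{E}[A\mid Z]=0$, then $$\inf_h\mathbb{E}[\ell(Y,h(Z))]\ge \operatorname{Var}(Y)\cdot\rho_{YA}^2.$$ If $\operatorname{Var}\mathbb{E}[Y\mid Z]=\operatorname{Var}(Y)$, then $$\inf_h\mathbb{E}[\ell(A,h(Z))]\le \operatorname{Var}(A)(1-\rho_{YA}^2).$$ The infima are over measurable functions $h$.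
   Context: A (possibly randomized) representation is $Z=g(X,S)$ for a measurable $g$ and auxiliary randomness $S$ independent of $(X,A,Y)$. $\phi(X)$ is assumed to have finite second moment in $\mathbb{H}$. *)

From HB Require Import structures.
From mathcomp Require Import all_boot all_order all_algebra.
From mathcomp Require Import all_classical all_reals all_analysis.
Set Implicit Arguments. Unset Strict Implicit. Unset Printing Implicit Defensive.
Import Order.TTheory GRing.Theory Num.Theory.
Local Open Scope classical_set_scope.
Local Open Scope ring_scope.

(* A reproducing kernel Hilbert space of real functions on T:
   H is a real vector space, [ip] an inner product on H which makes H
   complete, [ev f x] is the value at x of the function f (ev is linear and
   injective, so H is a space of functions on T), and [phi] is the feature
   map, with the reproducing property <f, phi x> = f x. *)
Definition is_RKHS (R : realType) (T : Type) (H : lmodType R)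
  (ip : H -> H -> R) (ev : H -> T -> R) (phi : T -> H) : Prop :=
  (forall (c : R) (f g h : H), ip (c *: f + g) h = c * ip f h + ip g h) /\
      (forall f g : H, ip f g = ip g f) /\
      (forall f : H, 0 <= ip f f) /\
      (forall f : H, ip f f = 0 -> f = 0) /\
      (forall u : nat -> H,
        (forall e : R, 0 < e -> exists N : nat, forall m n : nat,
           (N <= m)%N -> (N <= n)%N -> ip (u m - u n) (u m - u n) < e) ->
        exists l : H, forall e : R, 0 < e -> exists N : nat, forall n : nat,
           (N <= n)%N -> ip (u n - l) (u n - l) < e) /\
      (forall (c : R) (f g : H) (x : T), ev (c *: f + g) x = c * ev f x + ev g x) /\
      (forall f : H, (forall x, ev f x = 0) -> f = 0) /\
      (forall (f : H) (x : T), ip f (phi x) = ev f x).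

(* W is a version of the conditional expectation E[V | Z]:
   W is sigma(Z)-measurable (i.e. W = h o Z with h measurable), integrable,
   and has the same integral as V on every event {Z \in B}. *)
Definition is_cond_exp {d} {Omega : measurableType d} {R : realType}
  (P : probability Omega R) {dZ} {TZ : measurableType dZ}
  (V : Omega -> R) (Z : Omega -> TZ) (W : Omega -> R) : Prop :=
  exists h : TZ -> R,
    [/\ measurable_fun setT h,
        W = h \o Z,
        P.-integrable setT (EFin \o W) &
        forall B : set TZ, measurable B ->
          (\int[P]_(w in Z @^-1` B) (V w)%:E = \int[P]_(w in Z @^-1` B) (W w)%:E)%E].

Definition correlation {d} {Omega : measurableType d} {R : realType}
  (P : probability Omega R) (U V : Omega -> R) : R :=
  fine (covariance P U V) / Num.sqrt (fine (variance P U) * fine (variance P V)).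

Definition best_sq_risk {d} {Omega : measurableType d} {R : realType}
  (P : probability Omega R) {dZ} {TZ : measurableType dZ}
  (V : Omega -> R) (Z : Omega -> TZ) : \bar R :=
  ereal_inf [set (\int[P]_w ((V w - h (Z w)) ^+ 2)%:E)%E
            | h in [set h : TZ -> R | measurable_fun setT h]].

From HB Require Import structures.
From mathcomp Require Import all_boot all_order all_algebra.
From mathcomp Require Import all_classical all_reals all_analysis.
From mathcomp Require Import ring lra measurable_realfun.
Import Order.TTheory GRing.Theory Num.Theory.
Import numFieldNormedType.Exports.
Local Open Scope classical_set_scope.
Local Open Scope ring_scope.
Set Implicit Arguments. Unset Strict Implicit.

(* Both bounds rest on one fact: if W is a version of E[V | Z], then V - W is
   orthogonal to every square-integrable h(Z) (for indicators of events
   {Z \in B} this is the defining property, for simple h it follows by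
   linearity, and in general by dominated convergence), hence
   Cov(V, h(Z)) = Cov(W, h(Z)).
   If Var E[A | Z] = 0, then A is uncorrelated with every h(Z), so
   Cov(Y - h(Z), A) = Cov(Y, A) and Cauchy-Schwarz gives
   Cov(Y, A)^2 <= Var(Y - h(Z)) Var(A) <= E[(Y - h(Z))^2] Var(A).
   If Var E[Y | Z] = Var(Y), then Cov(Y, E[Y | Z]) = Var E[Y | Z] forces
   Var(Y - E[Y | Z]) = 0, so the predictor c + beta E[Y | Z] with
   beta = Cov(Y, A) / Var(Y) has risk Var(A - beta Y) = Var(A) (1 - rho^2).
   In the RKHS, Y and A are square integrable because
   <phi(X), v>^2 <= <phi(X), phi(X)> <v, v>. *)

Lemma ip_sqr_le (R : realType) (H : lmodType R) (ip : H -> H -> R) :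
  (forall (c : R) (f g h : H), ip (c *: f + g) h = c * ip f h + ip g h) ->
  (forall f g : H, ip f g = ip g f) ->
  (forall f : H, 0 <= ip f f) ->
  forall f g : H, 0 < ip g g -> ip f g ^+ 2 <= ip f f * ip g g.
Proof.
move=> ipDl ipC ip_ge0 f g gg_gt0.
set G := ip g g; set F := ip f g.
have G_neq0 : G != 0 by rewrite gt_eqF.
(* expand [0 <= <t g + f, t g + f>] at the minimiser [t = - <f, g> / <g, g>] *)
pose t := - (F / G).
have := ip_ge0 (t *: g + f).
rewrite ipDl (ipC g) (ipC f) !ipDl (ipC g f) -/G -/F.
have -> : t * (t * G + F) + (t * F + ip f f) = ip f f - F ^+ 2 / G by rewrite /t; field.
by rewrite subr_ge0 ler_pdivrMr.
Qed.

Section square_integrable.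
Context d (T : measurableType d) (R : realType) (P : probability T R).
Implicit Types f g : T -> R.

Lemma expectation_integral f : expectation P f = (\int[P]_w (f w)%:E)%E.
Proof. by rewrite unlock. Qed.

Lemma variance_sqr_integral f :
  variance P f = (\int[P]_w ((f w - fine (expectation P f)) ^+ 2)%:E)%E.
Proof. by rewrite /variance !unlock; apply: eq_integral => w _; rewrite /= expr2. Qed.

Lemma Lfun2_Lfun1 f : f \in Lfun P 2%:E -> f \in Lfun P 1.
Proof. by move=> f2; apply: (Lfun_subset12 _ f2); exact: fin_num_measure. Qed.

Lemma Lfun2_measurable f : f \in Lfun P 2%:E -> measurable_fun setT f.
Proof. by move=> f2; exact: set_mem (sub_Lfun_mfun f2). Qed.

Lemma Lfun2_of_sqr_integral f : measurable_fun setT f ->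
  (\int[P]_w (f w ^+ 2)%:E < +oo)%E -> f \in Lfun P 2%:E.
Proof.
move=> mf f2_fin; rewrite inE; apply/andP; split; rewrite inE //=.
rewrite /finite_norm unlock /Lnorm poweR_lty //.
under eq_integral => w _ do
  rewrite /= -[(2 : R)]/(2%:R) powR_mulrn // real_normK ?num_real //.
by [].
Qed.

Lemma Lfun2_of_sqr_le f (q : T -> R) (c : R) :
  measurable_fun setT f -> measurable_fun setT q -> (forall w, 0 <= q w) ->
  (\int[P]_w (q w)%:E < +oo)%E -> 0 <= c ->
  (forall w, f w ^+ 2 <= c * q w) -> f \in Lfun P 2%:E.
Proof.
move=> mf mq q_ge0 q_fin c_ge0 f_le; apply: Lfun2_of_sqr_integral => //.
apply: (@le_lt_trans _ _ (\int[P]_w (c%:E * (q w)%:E))%E).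
  apply: ge0_le_integral => //.
  - by move=> w _; rewrite lee_fin sqr_ge0.
  - by apply/measurable_EFinP; exact: measurable_funX.
  - by apply: emeasurable_funM => //; exact: measurableT_comp.
  - by move=> w _; rewrite -EFinM lee_fin.
rewrite ge0_integralZl //.
- by rewrite lte_mul_pinfty.
- exact: measurableT_comp.
- by move=> w _; rewrite lee_fin.
Qed.

Lemma Lfun2_of_variance f : measurable_fun setT f ->
  variance P f \is a fin_num -> f \in Lfun P 2%:E.
Proof.
move=> mf var_fin.
set m := fine (expectation P f).
have centered2 : (f \- cst m)%R \in Lfun P 2%:E.
  apply: Lfun2_of_sqr_integral; first exact: measurable_funB.
  by rewrite -variance_sqr_integral ltey_eq var_fin.
have -> : f = ((f \- cst m) \+ cst m)%R by apply/funext => w /=; rewrite subrK.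
apply: rpredD => //; last by move=> ?; exact: Lfun_cst.
by rewrite lee1n.
Qed.

Lemma variance_fineK f : f \in Lfun P 2%:E -> (fine (variance P f))%:E = variance P f.
Proof. by move=> f2; rewrite fineK // variance_fin_num. Qed.

Lemma covariance_fineK f g : f \in Lfun P 2%:E -> g \in Lfun P 2%:E ->
  (fine (covariance P f g))%:E = covariance P f g.
Proof.
move=> f2 g2; rewrite fineK //; apply: covariance_fin_num.
- exact: Lfun2_Lfun1.
- exact: Lfun2_Lfun1.
- exact: Lfun2_mul_Lfun1.
Qed.

Lemma sqr_covariance_le f g : f \in Lfun P 2%:E -> g \in Lfun P 2%:E ->
  fine (covariance P f g) ^+ 2 <= fine (variance P f) * fine (variance P g).
Proof.
move=> f2 g2.
have cov_le := covariance_le f2 g2.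
have Ng2 : (\- g)%R \in Lfun P 2%:E by rewrite rpredN.
have Ncov_le := covariance_le f2 Ng2.
rewrite covarianceNr in Ncov_le;
  [|exact: Lfun2_Lfun1|exact: Lfun2_Lfun1|exact: Lfun2_mul_Lfun1 f2 g2].
rewrite varianceN // in Ncov_le.
rewrite -(covariance_fineK f2 g2) -(variance_fineK f2) -(variance_fineK g2) /=
  in cov_le Ncov_le.
rewrite -EFinM !lee_fin in cov_le Ncov_le.
have vf_ge0 : 0 <= fine (variance P f) by apply: fine_ge0; exact: variance_ge0.
have vg_ge0 : 0 <= fine (variance P g) by apply: fine_ge0; exact: variance_ge0.
set c := fine (covariance P f g) in cov_le Ncov_le *.
set vf := fine (variance P f) in vf_ge0 cov_le Ncov_le *.
set vg := fine (variance P g) in vg_ge0 cov_le Ncov_le *.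
have -> : vf * vg = (Num.sqrt vf * Num.sqrt vg) ^+ 2 by rewrite exprMn !sqr_sqrtr.
have sqrt_ge0 : 0 <= Num.sqrt vf * Num.sqrt vg by rewrite mulr_ge0 ?sqrtr_ge0.
nra.
Qed.

Lemma covariance_variance0 f g : f \in Lfun P 2%:E -> g \in Lfun P 2%:E ->
  variance P f = 0%E -> covariance P f g = 0%E.
Proof.
move=> f2 g2 vf0.
have := sqr_covariance_le f2 g2; rewrite vf0 /= mul0r => cov2_le0.
rewrite -(covariance_fineK f2 g2); congr EFin; apply/eqP.
by rewrite -sqrf_eq0 eq_le cov2_le0 sqr_ge0.
Qed.

Lemma varianceD_variance0 f g : f \in Lfun P 2%:E -> g \in Lfun P 2%:E ->
  variance P g = 0%E -> variance P (f \+ g)%R = variance P f.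
Proof.
move=> f2 g2 vg0.
by rewrite varianceD // vg0 covarianceC (covariance_variance0 g2 f2) // mule0 !adde0.
Qed.

Lemma variance_le_expectation_sqr f : f \in Lfun P 2%:E ->
  (variance P f <= expectation P (f ^+ 2)%R)%E.
Proof.
move=> f2; have f1 := Lfun2_Lfun1 f2.
rewrite varianceE // -(fineK (expectation_fin_num f1)) -EFin_expe leeBlDr //.
by apply: leeDl; rewrite lee_fin sqr_ge0.
Qed.

End square_integrable.

Import HBSimple HBNNSimple.

Lemma sfun_dominated_approx d (T : measurableType d) (R : realType) (f : T -> R) :
  measurable_fun setT f ->
  exists g : {sfun T >-> R}^nat,
    (forall n x, `|g n x| <= `|f x|) /\ (forall x, g ^~ x @ \oo --> f x).
Proof.
move=> mf.
have nnsfun_approx_le (u : T -> R) : measurable_fun setT u -> (forall x, 0 <= u x) ->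
    exists v : {nnsfun T >-> R}^nat,
      (forall n x, v n x <= u x) /\ (forall x, v ^~ x @ \oo --> u x).
  move=> m_u u_ge0.
  have mEu : measurable_fun setT (EFin \o u) by exact/measurable_EFinP.
  have Eu_ge0 x : setT x -> (0 <= (EFin \o u) x)%E by rewrite lee_fin.
  exists (nnsfun_approx measurableT mEu); split => [n x|x].
    have := le_approx n Eu_ge0 (I : setT x).
    by rewrite -(nnsfun_approxE measurableT mEu) lee_fin.
  by have := cvg_nnsfun_approx measurableT mEu Eu_ge0 (I : setT x); move/fine_cvg.
have [up [up_le up_cvg]] := nnsfun_approx_le _ (measurable_funrpos mf) (funrpos_ge0 f).
have [un [un_le un_cvg]] := nnsfun_approx_le _ (measurable_funrneg mf) (funrneg_ge0 f).
exists (fun n => up n \+ cst (-1) \* un n); split => [n x|x] /=.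
  rewrite -[`|f x|]/((Num.norm \o f) x) -funrposDneg mulN1r.
  rewrite (le_trans (ler_normB _ _)) // [`|up n x|]ger0_norm // [`|un n x|]ger0_norm //.
  exact: lerD (up_le n x) (un_le n x).
under eq_fun do rewrite mulN1r.
have -> : f x = f^\+ x - f^\- x by rewrite -[in LHS](funrposBneg f).
exact: cvgB.
Qed.

Section orthogonality.
Context d (T : measurableType d) (R : realType) (mu : {measure set T -> \bar R}).
Context dZ (TZ : measurableType dZ) (Z : T -> TZ).
Hypothesis mZ : measurable_fun setT Z.
Variable D : T -> R.
Hypothesis iD : mu.-integrable setT (EFin \o D).
Hypothesis D_orth :
  forall B, measurable B -> (\int[mu]_(w in Z @^-1` B) (D w)%:E = 0)%E.

Let integral_mul_scaled_indic_comp (c : R) (B : set TZ) : measurable B ->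
  mu.-integrable setT (fun w => (D w * (c * \1_B (Z w)))%:E) /\
  (\int[mu]_w (D w * (c * \1_B (Z w)))%:E = 0)%E.
Proof.
move=> mB.
have mZB : measurable (Z @^-1` B) by rewrite -[Z @^-1` B]setTI; exact: mZ.
have iDB := (integrable_mkcond _ mZB).1 (integrableS measurableT mZB (@subsetT _ _) iD).
have -> : (fun w => (D w * (c * \1_B (Z w)))%:E) =
          (fun w => c%:E * ((EFin \o D) \_ (Z @^-1` B)) w)%E.
  apply/funext => w; rewrite /patch indicE.
  have -> : (w \in Z @^-1` B) = (Z w \in B) by [].
  by case: (Z w \in B); rewrite ?mulr1 ?mulr0 ?mule0 // -EFinM mulrC.
split; first exact: integrableZl.
by rewrite integralZl // -integral_mkcond D_orth // mule0.
Qed.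

Lemma integral_mul_sfun_comp_eq0 (s : {sfun TZ >-> R}) :
  (\int[mu]_w (D w * s (Z w))%:E = 0)%E.
Proof.
have ms (c : R) : measurable (s @^-1` [set c]) by exact: measurable_funPTI.
under eq_integral => w _ do rewrite (fimfunEord s (Z w)) mulr_sumr -sumEFin.
rewrite integral_sum //; last first.
  by move=> i; exact: (integral_mul_scaled_indic_comp _ (ms _)).1.
by rewrite big1 // => i _; exact: (integral_mul_scaled_indic_comp _ (ms _)).2.
Qed.

Lemma integral_mul_comp_eq0 (k : TZ -> R) : measurable_fun setT k ->
  mu.-integrable setT (fun w => (D w * k (Z w))%:E) ->
  (\int[mu]_w (D w * k (Z w))%:E = 0)%E.
Proof.
move=> mk iDk.
have [s [s_le s_cvg]] := sfun_dominated_approx mk.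
have mD : measurable_fun setT D by apply/measurable_EFinP; exact: measurable_int iD.
have mDs n : measurable_fun setT (fun w => (D w * s n (Z w))%:E).
  by apply/measurable_EFinP; apply: measurable_funM => //; exact: measurableT_comp.
have mDk : measurable_fun setT (fun w => (D w * k (Z w))%:E).
  by apply/measurable_EFinP; apply: measurable_funM => //; exact: measurableT_comp.
have Ds_cvg : {ae mu, forall w, setT w ->
    (fun n => (D w * s n (Z w))%:E) @ \oo --> (D w * k (Z w))%:E}%E.
  apply: aeW => w _; apply: cvg_EFin; first exact: nearW.
  exact: cvgM (cvg_cst (D w)) (s_cvg (Z w)).
have Ds_le : {ae mu, forall w n, setT w ->
    `|(D w * s n (Z w))%:E| <= `|(D w * k (Z w))%:E|}%E.
  by apply: aeW => w n _; rewrite lee_fin !normrM ler_wpM2l.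
have [_ _] := dominated_convergence measurableT mDs mDk Ds_cvg
  (integrable_abse iDk) Ds_le.
rewrite (_ : (fun n => _) = cst 0%E); last first.
  by apply/funext => n; exact: integral_mul_sfun_comp_eq0.
move=> /(cvg_unique (@ereal_hausdorff R) (cvg_cst 0%E)) int0.
by rewrite -int0.
Qed.

End orthogonality.

Section conditional_expectation.
Context d (T : measurableType d) (R : realType) (P : probability T R).
Context dZ (TZ : measurableType dZ) (Z : T -> TZ).
Hypothesis mZ : measurable_fun setT Z.

Lemma cond_exp_covariance (V W : T -> R) (h : TZ -> R) :
  is_cond_exp P V Z W -> V \in Lfun P 2%:E -> W \in Lfun P 2%:E ->
  measurable_fun setT h -> (h \o Z) \in Lfun P 2%:E ->
  covariance P V (h \o Z) = covariance P W (h \o Z).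
Proof.
move=> [_ [_ _ iW VW_Z]] V2 W2 mh hZ2.
have iV : P.-integrable setT (EFin \o V) by apply/Lfun1_integrable/Lfun2_Lfun1.
have D2 : (V \- W)%R \in Lfun P 2%:E by rewrite rpredB // lee1n.
have D_orth B : measurable B ->
    (\int[P]_(w in Z @^-1` B) ((V \- W)%R w)%:E = 0)%E.
  move=> mB; have mZB : measurable (Z @^-1` B) by rewrite -[Z @^-1` B]setTI; exact: mZ.
  rewrite /= (eq_integral (fun w => (V w)%:E - (W w)%:E)%E) // integralB_EFin //.
  - by rewrite VW_Z // subee // integrable_fin_num // (integrableS measurableT).
  - exact: integrableS iV.
  - exact: integrableS iW.
have ED0 : expectation P (V \- W)%R = 0%E.
  by rewrite expectation_integral -(D_orth setT) // preimage_setT.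
have DhZ1 := Lfun2_mul_Lfun1 D2 hZ2.
have EDh0 : expectation P ((V \- W) * (h \o Z))%R = 0%E.
  rewrite expectation_integral; apply: (integral_mul_comp_eq0 mZ _ D_orth mh).
    by apply/Lfun1_integrable/Lfun2_Lfun1.
  exact/Lfun1_integrable.
have : covariance P (V \- W)%R (h \o Z) = 0%E.
  by rewrite covarianceE ?EDh0 ?ED0 ?mul0e ?sube0 // Lfun2_Lfun1.
rewrite covarianceBl // -(covariance_fineK V2 hZ2) -(covariance_fineK W2 hZ2).
by rewrite -EFinB => /eqP; rewrite eqe subr_eq0 => /eqP ->.
Qed.

Lemma best_sq_risk_le_variance (V : T -> R) (k : TZ -> R) : measurable_fun setT k ->
  (best_sq_risk P V Z <= variance P (V \- (k \o Z))%R)%E.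
Proof.
move=> mk; set c := fine (expectation P (V \- (k \o Z))%R).
rewrite variance_sqr_integral; apply: ereal_inf_lbound; exists (fun z => c + k z).
  by apply: measurable_funD => //; exact: measurable_cst.
by apply: eq_integral => w _ /=; congr (EFin (_ ^+ 2)); rewrite -/c; ring.
Qed.

Lemma best_sq_risk_ge_of_cond_exp_variance0 (V A W : T -> R) :
  V \in Lfun P 2%:E -> A \in Lfun P 2%:E -> 0 < fine (variance P A) ->
  is_cond_exp P A Z W -> variance P W = 0%E ->
  ((fine (covariance P V A) ^+ 2 / fine (variance P A))%:E <= best_sq_risk P V Z)%E.
Proof.
move=> V2 A2 vA_gt0 AW W0.
have [k [mk eW _ _]] := AW.
have W2 : W \in Lfun P 2%:E.
  by apply: Lfun2_of_variance; [rewrite eW; exact: measurableT_comp|rewrite W0].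
apply: le_ereal_inf_tmp => _ [h mh <-].
have [risk_fin|] := ltP (\int[P]_w ((V w - h (Z w)) ^+ 2)%:E)%E +oo%E; last first.
  by rewrite leye_eq => /eqP ->; rewrite leey.
have mhZ : measurable_fun setT (h \o Z) := measurableT_comp mh mZ.
set U := (V \- (h \o Z))%R.
have U2 : U \in Lfun P 2%:E.
  apply: Lfun2_of_sqr_integral risk_fin.
  exact: measurable_funB (Lfun2_measurable V2) mhZ.
have hZ2 : (h \o Z) \in Lfun P 2%:E.
  have -> : h \o Z = (V \- U)%R by apply/funext => w /=; rewrite opprB addrC subrK.
  by rewrite rpredB // lee1n.
have A_hZ : covariance P A (h \o Z) = 0%E.
  by rewrite (cond_exp_covariance AW) // covariance_variance0.
have U_A : covariance P U A = covariance P V A.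
  by rewrite covarianceBl // (covarianceC _ (h \o Z)) A_hZ sube0.
have -> : (\int[P]_w ((V w - h (Z w)) ^+ 2)%:E)%E = expectation P (U ^+ 2)%R.
  by rewrite expectation_integral.
apply: le_trans _ (variance_le_expectation_sqr U2).
rewrite -(variance_fineK U2) lee_fin -U_A ler_pdivrMr //.
exact: sqr_covariance_le.
Qed.

Lemma best_sq_risk_le_of_cond_exp_full_variance (V A W : T -> R) :
  V \in Lfun P 2%:E -> A \in Lfun P 2%:E -> 0 < fine (variance P V) ->
  is_cond_exp P V Z W -> variance P W = variance P V ->
  (best_sq_risk P A Z <=
   (fine (variance P A) - fine (covariance P V A) ^+ 2 / fine (variance P V))%:E)%E.
Proof.
move=> V2 A2 vV_gt0 VW WV.
have [k [mk eW _ _]] := VW.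
have W2 : W \in Lfun P 2%:E.
  apply: Lfun2_of_variance; first by rewrite eW; exact: measurableT_comp.
  by rewrite WV variance_fin_num.
have kZ2 : (k \o Z) \in Lfun P 2%:E by rewrite -eW.
have VW_W : covariance P V W = variance P W.
  by have := cond_exp_covariance VW V2 W2 mk kZ2; rewrite -eW.
have VW0 : variance P (V \- W)%R = 0%E.
  rewrite varianceB // VW_W WV -(variance_fineK V2) -EFinM -EFinN -!EFinD.
  by congr EFin; ring.
set beta := fine (covariance P V A) / fine (variance P V).
apply: (le_trans (best_sq_risk_le_variance A (k := fun z => beta * k z) _)).
  exact: measurable_funM.
have -> : (A \- ((fun z => beta * k z) \o Z))%R = ((A \- beta \o* V) \+ beta \o* (V \- W))%R.
  by apply/funext => w /=; rewrite eW /=; ring.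
have bV2 : (beta \o* V)%R \in Lfun P 2%:E by rewrite Lfun_scale // ler1n.
have VW2 : (V \- W)%R \in Lfun P 2%:E by rewrite rpredB // lee1n.
have bVW2 : (beta \o* (V \- W))%R \in Lfun P 2%:E by rewrite Lfun_scale // ler1n.
have AbV2 : (A \- beta \o* V)%R \in Lfun P 2%:E by rewrite rpredB // lee1n.
rewrite varianceD_variance0 //; last by rewrite varianceZ // VW0 mule0.
have AV1 := Lfun2_mul_Lfun1 A2 V2.
rewrite varianceB // varianceZ // covarianceZr // ?Lfun2_Lfun1 //.
rewrite -(variance_fineK A2) -(variance_fineK V2) -(covariance_fineK A2 V2).
rewrite covarianceC -!EFinM -EFinN -!EFinD lee_fin /= /beta.
by rewrite le_eqVlt; apply/orP; left; apply/eqP; field; rewrite gt_eqF.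
Qed.

End conditional_expectation.

Theorem corollary3
  (R : realType) (d : measure_display) (Omega : measurableType d)
  (P : probability Omega R)
  (dX : measure_display) (TX : measurableType dX)
  (dS : measure_display) (TS : measurableType dS)
  (dZ : measure_display) (TZ : measurableType dZ)
  (H : lmodType R) (ip : H -> H -> R) (ev : H -> TX -> R) (phi : TX -> H)
  (X : Omega -> TX) (S : Omega -> TS) (g : TX * TS -> TZ)
  (y a : H) :
  is_RKHS ip ev phi ->
  measurable_fun setT X ->
  (forall h : H, measurable_fun setT (fun w => ip (phi (X w)) h)) ->
  measurable_fun setT (fun w => ip (phi (X w)) (phi (X w))) ->
  (\int[P]_w (ip (phi (X w)) (phi (X w)))%:E < +oo)%E ->
  y != 0 -> a != 0 ->
  let Y := fun w => ip (phi (X w)) y in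
  let A := fun w => ip (phi (X w)) a in
  (0 < variance P Y)%E -> (0 < variance P A)%E ->
  measurable_fun setT S ->
  (forall (B : set TX) (C : set TS), measurable B -> measurable C ->
     P (X @^-1` B `&` S @^-1` C) = (P (X @^-1` B) * P (S @^-1` C))%E) ->
  measurable_fun setT g ->
  let Z := fun w => g (X w, S w) in
  ((exists W, is_cond_exp P A Z W /\ variance P W = 0%E) ->
     ((fine (variance P Y) * correlation P Y A ^+ 2)%:E <= best_sq_risk P Y Z)%E)
  /\
  ((exists W, is_cond_exp P Y Z W /\ variance P W = variance P Y) ->
     (best_sq_risk P A Z <= (fine (variance P A) * (1 - correlation P Y A ^+ 2))%:E)%E).
Proof.
move=> RKHS mX mXv mXX XX_fin y0 a0 Y A vY_gt0 vA_gt0 mS _ mg Z.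
have [ipDl [ipC [ip_ge0 [ip_eq0 _]]]] := RKHS.
have mZ : measurable_fun setT Z := measurableT_comp mg (measurable_fun_pair mX mS).
have feature_Lfun2 v : v != 0 -> (fun w => ip (phi (X w)) v) \in Lfun P 2%:E.
  move=> v0; have vv_gt0 : 0 < ip v v.
    by rewrite lt_neqAle ip_ge0 andbT eq_sym; apply: contra v0 => /eqP/ip_eq0 ->.
  apply: (Lfun2_of_sqr_le (mXv v) mXX (fun w => ip_ge0 _) XX_fin (ltW vv_gt0)) => w.
  by rewrite mulrC ip_sqr_le.
have Y2 := feature_Lfun2 y y0; have A2 := feature_Lfun2 a a0.
rewrite -(variance_fineK Y2) -(variance_fineK A2) !lte_fin in vY_gt0 vA_gt0.
have rho2 : correlation P Y A ^+ 2 =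
    fine (covariance P Y A) ^+ 2 / (fine (variance P Y) * fine (variance P A)).
  by rewrite /correlation expr_div_n sqr_sqrtr // mulr_ge0 // ltW.
rewrite rho2; split => [[W [AW W0]] | [W [YW WY]]].
- apply: le_trans _ (best_sq_risk_ge_of_cond_exp_variance0 mZ Y2 A2 vA_gt0 AW W0).
  by rewrite lee_fin le_eqVlt; apply/orP; left; apply/eqP; field; rewrite !gt_eqF.
- apply: le_trans (best_sq_risk_le_of_cond_exp_full_variance mZ Y2 A2 vY_gt0 YW WY) _.
  by rewrite lee_fin le_eqVlt; apply/orP; left; apply/eqP; field; rewrite !gt_eqF.
Qed.
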